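(* In $Y_R(\mathfrak{so}_3)$: $$[e_{-1,0}(u),f_{0,-1}(v)]=\frac{k_{-1}^{-1}(u)k_0(u)-k_{-1}^{-1}(v)k_0(v)}{u-v}.$$
   Context: Let $e_{ij}$ ($i,j\in\{-1,0,1\}$) be the matrix units of $\mathrm{End}\,\mathbb{C}^3$, with rows and columns indexed by $-1,0,1$. Let $P=\sum_{i,j}e_{ij}\otimes e_{ji}$, $Q=\sum_{i,j}e_{ij}\otimes e_{-i,-j}$ and $R(u)=1-\frac{P}{u}+\frac{Q}{u-\frac12}$. Let $t$ be the transposition on $\mathrm{End}\,\mathbb{C}^3$ given by $(e_{ij})^t=e_{-j,-i}$. The algebra $Y_R(\mathfrak{so}_3)$ is the unital associative algebra over $\mathbb{C}$ generated by elements $t_{ij}^{(r)}$, $r\ge 1$, $i,j\in\{-1,0,1\}$; put $t_{ij}(u)=\delta_{ij}+\sum_{r\ge1}t^{(r)}_{ij}u^{-r}$, $T(u)=\sum_{i,j}t_{ij}(u)\otimes e_{ij}$, $T^t(u)=\sum_{i,j}t_{ij}(u)\otimes e_{-j,-i}$, $T_1(u)=\sum t_{ij}(u)\otimes e_{ij}\otimes 1$, $T_2(v)=\sum t_{ij}(v)\otimes 1\otimes e_{ij}$. The defining relations are $R(u-v)T_1(u)T_2(v)=T_2(v)T_1(u)R(u-v)$ and $T(u)T^t(u+\frac12)=T^t(u+\frac12)T(u)=1$. The Gauss generators are the unique series $k_i(u)\in 1+u^{-1}Y_R(\mathfrak{so}_3)[[u^{-1}]]$ ($i=-1,0,1$)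 and $e_{ij}(u),f_{ji}(u)\in u^{-1}Y_R(\mathfrak{so}_3)[[u^{-1}]]$ ($-1\le i<j\le1$) such that $T(u)=F(u)K(u)E(u)$, where $F(u)$ is the lower unitriangular matrix with below-diagonal entries $F_{0,-1}=f_{0,-1}(u)$, $F_{1,-1}=f_{1,-1}(u)$, $F_{1,0}=f_{1,0}(u)$, $K(u)=\mathrm{diag}(k_{-1}(u),k_0(u),k_1(u))$, and $E(u)$ is the upper unitriangular matrix with above-diagonal entries $E_{-1,0}=e_{-1,0}(u)$, $E_{-1,1}=e_{-1,1}(u)$, $E_{0,1}=e_{01}(u)$ (rows/columns indexed by $-1,0,1$). *)

From HB Require Import structures.
From mathcomp Require Import all_boot all_order all_algebra.
Set Implicit Arguments. Unset Strict Implicit. Unset Printing Implicit Defensive.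
Import GRing.Theory.
Local Open Scope ring_scope.

(* Conventions.
   - The index set {-1,0,1} is encoded by 'I_3 : -1 |-> 0, 0 |-> 1, 1 |-> 2.
     Then i |-> -i is rev_ord.
   - A one-variable series s : nat -> A stands for  sum_{n>=0} s n * u^{-n}.
   - A two-variable object X : int -> int -> A stands for sum_{a,b} X a b u^a v^b
     (coefficients of u^a v^b, a,b in Z).
   - An element of A (x) End C^3 (x) End C^3 with coefficients in such
     two-variable objects is a function (i j k l : 'I_3) -> int -> int -> A,
     giving the coefficient of e_ij (x) e_kl. *)

Definition im1 : 'I_3 := @Ordinal 3 0 isT.
Definition i0  : 'I_3 := @Ordinal 3 1 isT.
Definition ip1 : 'I_3 := @Ordinal 3 2 isT.

Section Defs.
Variables (F : fieldType) (A : algType F).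

Definition ser_one : nat -> A := fun n => (n == 0)%:R.
Definition ser_mul (x y : nat -> A) : nat -> A :=
  fun n => \sum_(r < n.+1) x r * y (n - r)%N.

(* coefficients of x(u + c), where x(u) = sum_r x r u^{-r}:
   (u+c)^{-r} = sum_m (-1)^m C(r+m-1,m) c^m u^{-r-m}. *)
Definition ser_shift (c : F) (x : nat -> A) : nat -> A :=
  fun n => \sum_(r < n.+1)
             ((-1) ^+ (n - r) * ('C(n.-1, n - r))%:R * c ^+ (n - r)) *: x r.

Definition ser2 (c : nat -> nat -> A) : int -> int -> A :=
  fun a b => if (a <= 0) && (b <= 0) then c `|a|%N `|b|%N else 0.
(* g(u) and g(v) as two-variable objects *)
Definition lift_u (g : nat -> A) : int -> int -> A :=
  ser2 (fun m n => if n == 0%N then g m else 0).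
Definition lift_v (g : nat -> A) : int -> int -> A :=
  ser2 (fun m n => if m == 0%N then g n else 0).
(* multiplication by (u - v) *)
Definition mul_umv (X : int -> int -> A) : int -> int -> A :=
  fun a b => X (a - 1) b - X a (b - 1).
Definition half : F := (2%:R)^-1.
(* multiplication by (u - v - 1/2) *)
Definition mul_umvh (X : int -> int -> A) : int -> int -> A :=
  fun a b => mul_umv X a b - half *: X a b.

Definition op4 (B : Type) := 'I_3 -> 'I_3 -> 'I_3 -> 'I_3 -> B.

Definition Pmat : op4 F := fun i j k l => ((i == l) && (j == k))%:R.
Definition Qmat : op4 F := fun i j k l => ((k == rev_ord i) && (l == rev_ord j))%:R.

Definition opmul_l (S : op4 F) (X : op4 (int -> int -> A)) : op4 (int -> int -> A) :=
  fun i j k l a b => \sum_(p < 3) \sum_(q < 3) S i p k q *: X p j q l a b.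
Definition opmul_r (X : op4 (int -> int -> A)) (S : op4 F) : op4 (int -> int -> A) :=
  fun i j k l a b => \sum_(p < 3) \sum_(q < 3) S p j q l *: X i p k q a b.

(* (u-v)(u-v-1/2) R(u-v) = (u-v)(u-v-1/2) - (u-v-1/2) P + (u-v) Q *)
Definition Rmul_l (X : op4 (int -> int -> A)) : op4 (int -> int -> A) :=
  fun i j k l a b =>
    mul_umv (mul_umvh (X i j k l)) a b
    - mul_umvh (opmul_l Pmat X i j k l) a b
    + mul_umv (opmul_l Qmat X i j k l) a b.
Definition Rmul_r (X : op4 (int -> int -> A)) : op4 (int -> int -> A) :=
  fun i j k l a b =>
    mul_umv (mul_umvh (X i j k l)) a b
    - mul_umvh (opmul_r X Pmat i j k l) a b
    + mul_umv (opmul_r X Qmat i j k l) a b.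

(* T i j : the series t_ij(u) (coefficient 0 is delta_ij) *)
Definition T1T2 (T : 'I_3 -> 'I_3 -> nat -> A) : op4 (int -> int -> A) :=
  fun i j k l => ser2 (fun m n => T i j m * T k l n).
Definition T2T1 (T : 'I_3 -> 'I_3 -> nat -> A) : op4 (int -> int -> A) :=
  fun i j k l => ser2 (fun m n => T k l n * T i j m).

Definition YR_so3_rel (T : 'I_3 -> 'I_3 -> nat -> A) : Prop :=
  [/\ (forall i j, T i j 0%N = (i == j)%:R),
      (* R(u-v) T_1(u) T_2(v) = T_2(v) T_1(u) R(u-v), cleared of denominators *)
      (forall i j k l a b, Rmul_l (T1T2 T) i j k l a b = Rmul_r (T2T1 T) i j k l a b),
      (* T(u) T^t(u+1/2) = 1, with T^t_{pq}(u) = t_{-q,-p}(u) *)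
      (forall i j n, \sum_(p < 3)
          ser_mul (T i p) (ser_shift half (T (rev_ord j) (rev_ord p))) n
          = (i == j)%:R * ser_one n) &
      (* T^t(u+1/2) T(u) = 1 *)
      (forall i j n, \sum_(p < 3)
          ser_mul (ser_shift half (T (rev_ord p) (rev_ord i))) (T p j) n
          = (i == j)%:R * ser_one n)].

Definition Fmat (f : 'I_3 -> 'I_3 -> nat -> A) : 'I_3 -> 'I_3 -> nat -> A :=
  fun i j => if i == j then ser_one else if (j < i)%N then f i j else (fun _ => 0).
Definition Emat (e : 'I_3 -> 'I_3 -> nat -> A) : 'I_3 -> 'I_3 -> nat -> A :=
  fun i j => if i == j then ser_one else if (i < j)%N then e i j else (fun _ => 0).

Definition gauss_decomp (T : 'I_3 -> 'I_3 -> nat -> A)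
    (k : 'I_3 -> nat -> A) (e f : 'I_3 -> 'I_3 -> nat -> A) : Prop :=
  [/\ (forall i, k i 0%N = 1),
      (forall i j : 'I_3, (i < j)%N -> e i j 0%N = 0),
      (forall i j : 'I_3, (i < j)%N -> f j i 0%N = 0) &
      (forall i j n, T i j n =
         \sum_(p < 3) ser_mul (ser_mul (Fmat f i p) (k p)) (Emat e p j) n)].

End Defs.

From Pilot Require Import Defs.
From HB Require Import structures.
From mathcomp Require Import all_boot all_order all_algebra.
From mathcomp Require Import boolp zify.
Import GRing.Theory.
Set Implicit Arguments. Unset Strict Implicit. Unset Printing Implicit Defensive.
Local Open Scope ring_scope.

(* All series are handled in the ring A[[x, y]] of formal power series in
   x = u^{-1} and y = v^{-1}, built as fps (fps A); a one-variable series g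
   gives g(u) = U g and g(v) = V g, and the integer-indexed objects of Defs
   are recovered from A[[x, y]] through the embedding emb.  Identities are
   multiplied by x y = 1/(u v), so u - v becomes y - x.
   1. For k <> -i and l <> -j the Q-term of the RTT relation vanishes, and
      cancelling the non-zero-divisor u - v - 1/2 leaves the relation
        (u - v) [t_ij(u), t_kl(v)] = t_kj(u) t_il(v) - t_kj(v) t_il(u)
      (rtt_entry).
   2. The Gauss decomposition expresses t_{-1,-1}, t_{-1,0}, t_{0,-1} and
      t_{00} through k_{-1}, k_0, e_{-1,0} and f_{0,-1} (tser_mm ... tser_00).
   3. Five instances of step 1 combine, in any ring where D = u - v is central
      and regular (ef_commutator), into
        (u - v) [e(u), f(v)] = k_{-1}(u)^{-1} k_0(u) - k_0(v) k_{-1}(v)^{-1}.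
   4. A series g(u) - g'(v) divisible by u - v has g = g' (eq_of_divisible),
      so k_0 k_{-1}^{-1} = k_{-1}^{-1} k_0, which gives the proposition. *)

(* Normalisation in abelian groups.  [abel] proves an equation between two
   sums of signed atoms of a zmodType by comparing, for every atom, the
   number of its positive and negative occurrences.  It replaces [ring],
   which is unavailable in the noncommutative rings used below. *)
Section AbelianNormalisation.
Variable V : zmodType.

Definition signed_atom (l : seq V) (p : bool * nat) : V :=
  if p.1 then - nth 0 l p.2 else nth 0 l p.2.
(* Written with a left fold so that it unfolds to left-associated sums. *)
Definition signed_sum (l : seq V) (s : seq (bool * nat)) : V :=
  match s with
  | [::] => 0
  | p :: s' => foldl (fun acc q => acc + signed_atom l q) (signed_atom l p) s'
  end.
Definition pos_count (s : seq (bool * nat)) i := count (fun p => (p.2 == i) && ~~ p.1) s.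
Definition neg_count (s : seq (bool * nat)) i := count (fun p => (p.2 == i) && p.1) s.

Lemma signed_sumE l s : signed_sum l s = \sum_(p <- s) signed_atom l p.
Proof.
case: s => [|p s]; first by rewrite big_nil.
rewrite /signed_sum big_cons; elim: s (signed_atom l p) => [|q s IH] acc /=.
  by rewrite big_nil addr0.
by rewrite IH big_cons addrA.
Qed.

Lemma signed_sum_collect l s : all (fun p => p.2 < size l)%N s ->
  \sum_(p <- s) signed_atom l p =
  \sum_(i <- iota 0 (size l)) (nth 0 l i *+ pos_count s i - nth 0 l i *+ neg_count s i).
Proof.
elim: s => [|p s IH] /=; first by rewrite big_nil big1 // => i _; rewrite subrr.
case/andP=> hp hs; rewrite big_cons IH //.
have -> : \sum_(i <- iota 0 (size l))
      (nth 0 l i *+ pos_count (p :: s) i - nth 0 l i *+ neg_count (p :: s) i) =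
   \sum_(i <- iota 0 (size l))
      ((nth 0 l i *+ ((p.2 == i) && ~~ p.1) - nth 0 l i *+ ((p.2 == i) && p.1))
       + (nth 0 l i *+ pos_count s i - nth 0 l i *+ neg_count s i)).
  apply: eq_bigr => i _; rewrite /pos_count /neg_count /= !mulrnDr.
  by rewrite opprD addrACA.
rewrite [RHS]big_split /=; congr (_ + _).
rewrite (bigD1_seq p.2) ?iota_uniq ?mem_iota ?add0n //= eqxx.
rewrite big1_seq ?addr0; last first.
  by move=> i /andP [hi _]; rewrite eq_sym (negbTE hi) /= !mulr0n subrr.
by rewrite /signed_atom; case: p.1; rewrite /= ?mulr0n ?mulr1n ?sub0r ?subr0.
Qed.

Lemma signed_sum_eq (l : seq V) s1 s2 :
  all (fun p => p.2 < size l)%N s1 -> all (fun p => p.2 < size l)%N s2 ->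
  all (fun i => pos_count s1 i + neg_count s2 i == pos_count s2 i + neg_count s1 i)%N
      (iota 0 (size l)) ->
  signed_sum l s1 = signed_sum l s2.
Proof.
move=> h1 h2 /allP h; rewrite !signed_sumE !signed_sum_collect //.
apply: eq_big_seq => i /h /eqP e; apply/eqP.
by rewrite subr_eq addrAC eq_sym subr_eq -!mulrnDr e.
Qed.
End AbelianNormalisation.

Ltac abel_same x h :=
  constr:(ltac:(tryif unify x h then exact true else exact false) : bool).
Ltac abel_add_atom x l :=
  lazymatch l with
  | nil => constr:(x :: l)
  | ?h :: ?t => let b := abel_same x h in
      lazymatch b with
      | true => l
      | false => let t' := abel_add_atom x t in constr:(h :: t')
      end
  end.
Ltac abel_atoms e l :=
  lazymatch e with
  | (?x + ?y)%R => let l1 := abel_atoms x l in abel_atoms y l1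
  | (- ?x)%R => abel_atoms x l
  | _ => abel_add_atom e l
  end.
Ltac abel_index x l :=
  lazymatch l with
  | ?h :: ?t => let b := abel_same x h in
      lazymatch b with
      | true => constr:(0%N)
      | false => let n := abel_index x t in constr:(n.+1)
      end
  end.
Ltac abel_reify e l :=
  lazymatch e with
  | (?x + ?y)%R => let a := abel_reify x l in let b := abel_reify y l in constr:(a ++ b)
  | (- ?x)%R => let n := abel_index x l in constr:([:: (true, n)])
  | _ => let n := abel_index e l in constr:([:: (false, n)])
  end.
Ltac abel :=
  rewrite ?(opprD, opprK, addrA);
  lazymatch goal with |- ?e1 = ?e2 =>
    let T := type of e1 in
    let l0 := abel_atoms e1 (@nil T) in
    let l := abel_atoms e2 l0 in
    let s1 := abel_reify e1 l in let s2 := abel_reify e2 l in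
    let s1 := eval simpl in s1 in let s2 := eval simpl in s2 in
    change (signed_sum l s1 = signed_sum l s2);
    apply: signed_sum_eq; vm_compute; reflexivity
  end.

(* Expand products over sums, then move the central elements c1 and c2 to
   the left of every monomial (c1 first), so that monomials differing only
   by the position of central factors become syntactically equal. *)
Ltac expand := rewrite ?(mulrDr, mulrDl, mulrBr, mulrBl, mulrN, mulNr, opprD, opprK, mulrA, addrA).
Ltac central_prefix1 c X := lazymatch X with c => idtac | ?Y * c => central_prefix1 c Y end.
Ltac central_prefix2 c1 c2 X := lazymatch X with c1 => idtac | c2 => idtac
  | ?Y * c1 => central_prefix2 c1 c2 Y | ?Y * c2 => central_prefix2 c1 c2 Y end.
Ltac central_norm c1 h1 c2 h2 := rewrite ?mulrA;
  repeat (match goal with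
   | |- context [?X * c1] =>
       tryif central_prefix1 c1 X then fail else rewrite -[X * c1]h1 ?mulrA
   | |- context [?X * c2] =>
       tryif central_prefix2 c1 c2 X then fail else rewrite -[X * c2]h2 ?mulrA
   end).

(* Formal power series sum_n c_n t^n with coefficients in R.  Below t
   stands for u^{-1} (or v^{-1}), so these are the series of the paper. *)
Record fps (R : Type) := Fps { fcoef : nat -> R }.
Arguments Fps {R}. Arguments fcoef {R}.

Lemma fpsP R (s t : fps R) : (forall n, fcoef s n = fcoef t n) -> s = t.
Proof. by case: s; case: t => f g H; congr Fps; apply: funext => n; exact: H. Qed.

HB.instance Definition _ (R : Type) := gen_eqMixin (fps R).
HB.instance Definition _ (R : Type) := gen_choiceMixin (fps R).

Section FpsZmodule.
Variable R : zmodType.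
Definition fps_zero : fps R := Fps (fun _ => 0).
Definition fps_opp (s : fps R) := Fps (fun n => - fcoef s n).
Definition fps_add (s t : fps R) := Fps (fun n => fcoef s n + fcoef t n).
Lemma fps_addA : associative fps_add.
Proof. by move=> ? ? ?; apply: fpsP => n /=; rewrite addrA. Qed.
Lemma fps_addC : commutative fps_add.
Proof. by move=> ? ?; apply: fpsP => n /=; rewrite addrC. Qed.
Lemma fps_add0 : left_id fps_zero fps_add.
Proof. by move=> ?; apply: fpsP => n /=; rewrite add0r. Qed.
Lemma fps_addN : left_inverse fps_zero fps_opp fps_add.
Proof. by move=> ?; apply: fpsP => n /=; rewrite addNr. Qed.
HB.instance Definition _ := GRing.isZmodule.Build (fps R) fps_addA fps_addC fps_add0 fps_addN.

Lemma fcoef_sum I (r : seq I) (P : pred I) (G : I -> fps R) n :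
  fcoef (\sum_(i <- r | P i) G i) n = \sum_(i <- r | P i) fcoef (G i) n.
Proof. by elim/big_rec2: _ => // i y1 y2 _ <-. Qed.
End FpsZmodule.

Section FpsRing.
Variable R : nzRingType.
Definition fps_one : fps R := Fps (fun n => (n == 0)%:R).
Definition fps_mul (s t : fps R) : fps R :=
  Fps (fun n => \sum_(r < n.+1) fcoef s r * fcoef t (n - r)).

(* Truncations to polynomials reduce associativity of the Cauchy product to
   that of polynomial multiplication. *)
Definition fps_trunc N (s : fps R) : {poly R} := \poly_(i < N) fcoef s i.

Lemma coefM_congr (p p' q q' : {poly R}) n :
  (forall j, (j <= n)%N -> p`_j = p'`_j) -> (forall j, (j <= n)%N -> q`_j = q'`_j) ->
  (p * q)`_n = (p' * q')`_n.
Proof.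
move=> Hp Hq; rewrite !coefM; apply: eq_bigr => i _.
by rewrite Hp ?Hq // ?leq_subr // -ltnS.
Qed.

Lemma fps_mul_trunc N s t n : (n < N)%N ->
  fcoef (fps_mul s t) n = (fps_trunc N s * fps_trunc N t)`_n.
Proof.
move=> nN; rewrite coefM /=; apply: eq_bigr => i _.
rewrite !coef_poly (leq_ltn_trans _ nN) ?(leq_ltn_trans _ nN) ?leq_subr //.
by rewrite -ltnS.
Qed.

Lemma fps_mulA : associative fps_mul.
Proof.
move=> s t u; apply: fpsP => n.
have trM j x y : (j <= n)%N ->
    (fps_trunc n.+1 (fps_mul x y))`_j = (fps_trunc n.+1 x * fps_trunc n.+1 y)`_j.
  by move=> jn; rewrite coef_poly ltnS jn -(fps_mul_trunc (N:=n.+1)).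
rewrite (fps_mul_trunc (N:=n.+1)) // [RHS](fps_mul_trunc (N:=n.+1)) //.
transitivity ((fps_trunc n.+1 s * (fps_trunc n.+1 t * fps_trunc n.+1 u))`_n).
  by apply: coefM_congr => // j jn; rewrite trM.
by rewrite mulrA; apply: coefM_congr => // j jn; rewrite trM.
Qed.

Lemma fps_mul1 : left_id fps_one fps_mul.
Proof.
move=> s; apply: fpsP => n /=; rewrite big_ord_recl /= mul1r subn0 big1 ?addr0 //.
by move=> i _; rewrite mul0r.
Qed.
Lemma fps_mulr1 : right_id fps_one fps_mul.
Proof.
move=> s; apply: fpsP => n /=; rewrite big_ord_recr /= subnn mulr1 big1 ?add0r //.
by move=> i _; rewrite subn_eq0 leqNgt ltn_ord /= mulr0.
Qed.
Lemma fps_mulDl : left_distributive fps_mul +%R.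
Proof.
move=> s t u; apply: fpsP => n /=; rewrite -big_split /=.
by apply: eq_bigr => i _; rewrite mulrDl.
Qed.
Lemma fps_mulDr : right_distributive fps_mul +%R.
Proof.
move=> s t u; apply: fpsP => n /=; rewrite -big_split /=.
by apply: eq_bigr => i _; rewrite mulrDr.
Qed.
Lemma fps_one_neq0 : fps_one != 0.
Proof.
by apply/eqP => /(congr1 (fcoef^~ 0%N)) /= /eqP; rewrite oner_eq0.
Qed.
HB.instance Definition _ := GRing.Zmodule_isNzRing.Build (fps R)
  fps_mulA fps_mul1 fps_mulr1 fps_mulDl fps_mulDr fps_one_neq0.

Lemma fcoefM s t n : fcoef (s * t) n = \sum_(r < n.+1) fcoef s r * fcoef t (n - r).
Proof. by []. Qed.

Definition cst (a : R) : fps R := Fps (fun n => if n == 0%N then a else 0).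
Lemma fcoef_cstM a s n : fcoef (cst a * s) n = a * fcoef s n.
Proof. by rewrite fcoefM big_ord_recl /= subn0 big1 ?addr0 // => i _; rewrite mul0r. Qed.
Lemma fcoef_Mcst a s n : fcoef (s * cst a) n = fcoef s n * a.
Proof.
rewrite fcoefM big_ord_recr /= subnn eqxx big1 ?add0r // => i _.
by rewrite subn_eq0 leqNgt ltn_ord /= mulr0.
Qed.
Lemma cstM a b : cst (a * b) = cst a * cst b.
Proof. by apply: fpsP => n; rewrite fcoef_cstM /=; case: eqP; rewrite ?mulr0. Qed.
Lemma cstD a b : cst (a + b) = cst a + cst b.
Proof. by apply: fpsP => n /=; case: eqP; rewrite ?addr0. Qed.
Lemma cstB a b : cst (a - b) = cst a - cst b.
Proof. by apply: fpsP => n /=; case: eqP; rewrite ?subr0. Qed.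
Lemma cst1 : cst 1 = 1.
Proof. by apply: fpsP; case. Qed.
Lemma cst0 : cst 0 = 0.
Proof. by apply: fpsP; case. Qed.
Lemma cst_sum I (r : seq I) (P : pred I) (G : I -> R) :
  cst (\sum_(i <- r | P i) G i) = \sum_(i <- r | P i) cst (G i).
Proof. by elim/big_rec2: _ => [|i y1 y2 _ <-]; rewrite ?cst0 ?cstD. Qed.

Definition fpsX : fps R := Fps (fun n => (n == 1%N)%:R).
Lemma fcoef_XM s n : fcoef (fpsX * s) n = if n is m.+1 then fcoef s m else 0.
Proof.
rewrite fcoefM; case: n => [|n]; first by rewrite big_ord1 /= mul0r.
rewrite big_ord_recl /= mul0r add0r big_ord_recl /= mul1r subSS subn0 big1 ?addr0 //.
by move=> i _; rewrite mul0r.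
Qed.
Lemma fcoef_MX s n : fcoef (s * fpsX) n = if n is m.+1 then fcoef s m else 0.
Proof.
rewrite fcoefM; case: n => [|n]; first by rewrite big_ord1 /= mulr0.
rewrite big_ord_recr /= subnn mulr0 addr0 big_ord_recr /= subSn // subnn mulr1.
rewrite big1 ?add0r // => i _.
rewrite subSn; last exact/ltnW/ltn_ord.
by rewrite eqSS subn_eq0 leqNgt ltn_ord mulr0.
Qed.
Lemma fpsX_central s : GRing.comm fpsX s.
Proof. by apply: fpsP => n; rewrite fcoef_XM fcoef_MX. Qed.
End FpsRing.
Arguments fpsX {R}.

(* Two-variable series: Z = sum_{i,j} Z_{ij} x^i y^j, where x = u^{-1} and
   y = v^{-1}.  A series g in one variable gives g(u) = U g and g(v) = V g. *)
Section TwoVariables.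
Variable R : nzRingType.
Local Notation S := (fps (fps R)).

Definition coef (Z : S) i j := fcoef (fcoef Z i) j.
Lemma coefP (Z W : S) : (forall i j, coef Z i j = coef W i j) -> Z = W.
Proof. by move=> H; apply: fpsP => i; apply: fpsP => j; apply: H. Qed.
Lemma coefB (Z W : S) i j : coef (Z - W) i j = coef Z i j - coef W i j.
Proof. by []. Qed.
Lemma coefM (Z W : S) i j : coef (Z * W) i j =
  \sum_(p < i.+1) \sum_(q < j.+1) coef Z p q * coef W (i - p) (j - q).
Proof. by rewrite /coef fcoefM fcoef_sum; apply: eq_bigr => p _; rewrite fcoefM. Qed.

Definition U (s : fps R) : S := Fps (fun i => cst (fcoef s i)).
Definition V (s : fps R) : S := cst s.
Lemma coefU s i j : coef (U s) i j = if j == 0%N then fcoef s i else 0.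
Proof. by []. Qed.
Lemma coefV s i j : coef (V s) i j = if i == 0%N then fcoef s j else 0.
Proof. by rewrite /coef /V /=; case: eqP. Qed.
Lemma coefUV s t i j : coef (U s * V t) i j = fcoef s i * fcoef t j.
Proof. by rewrite /coef /V fcoef_Mcst fcoef_cstM. Qed.
Lemma coefVU s t i j : coef (V t * U s) i j = fcoef t j * fcoef s i.
Proof. by rewrite /coef /V fcoef_cstM fcoef_Mcst. Qed.

Lemma UM s t : U (s * t) = U s * U t.
Proof.
apply: fpsP => i; rewrite (fcoefM (U s) (U t)) /U /= cst_sum.
by apply: eq_bigr => p _; rewrite cstM.
Qed.
Lemma UD s t : U (s + t) = U s + U t.
Proof. by apply: fpsP => i; rewrite /= cstD. Qed.
Lemma U1 : U 1 = 1.
Proof. by apply: fpsP => i /=; case: (i == 0%N); rewrite ?cst1 ?cst0. Qed.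
Lemma VM s t : V (s * t) = V s * V t. Proof. exact: cstM. Qed.
Lemma VD s t : V (s + t) = V s + V t. Proof. exact: cstD. Qed.
Lemma VB s t : V (s - t) = V s - V t. Proof. exact: cstB. Qed.
Lemma V1 : V 1 = 1. Proof. exact: cst1. Qed.

Definition xx : S := U fpsX.
Definition yy : S := V fpsX.
Lemma xxE : xx = fpsX.
Proof. by apply: fpsP => i /=; case: (i == 1%N); rewrite ?cst1 ?cst0. Qed.
Lemma coef_xM Z i j : coef (xx * Z) i j = if i is i'.+1 then coef Z i' j else 0.
Proof. by rewrite xxE /coef fcoef_XM; case: i. Qed.
Lemma coef_yM Z i j : coef (yy * Z) i j = if j is j'.+1 then coef Z i j' else 0.
Proof. by rewrite /coef /yy /V fcoef_cstM fcoef_XM. Qed.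
Lemma xx_central Z : GRing.comm xx Z.
Proof. by rewrite /GRing.comm xxE fpsX_central. Qed.
Lemma yy_central Z : GRing.comm yy Z.
Proof. by apply: fpsP => i; rewrite /yy /V fcoef_cstM fcoef_Mcst fpsX_central. Qed.

Lemma xy_central Z : GRing.comm (xx * yy) Z.
Proof. by rewrite /GRing.comm -mulrA yy_central mulrA xx_central -mulrA. Qed.

Definition CC (c : R) : S := cst (cst c).
Lemma coef_CM c Z i j : coef (CC c * Z) i j = c * coef Z i j.
Proof. by rewrite /coef /CC !fcoef_cstM. Qed.
Lemma CC_central c Z : (forall a, GRing.comm c a) -> GRing.comm (CC c) Z.
Proof.
move=> Hc; apply: fpsP => i; rewrite /CC fcoef_cstM fcoef_Mcst.
by apply: fpsP => j; rewrite fcoef_cstM fcoef_Mcst Hc.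
Qed.

(* y - x - c x y, i.e. (u - v - c)/(uv), is not a zero divisor. *)
Definition dxy (c : R) : S := yy - xx - CC c * (xx * yy).

Lemma dxy_reg c Z : dxy c * Z = 0 -> Z = 0.
Proof.
rewrite /dxy !mulrBl -!mulrA => H.
have E i j : coef Z i j - (if i is i'.+1 then coef Z i' j.+1 else 0)
   - c * (if i is i'.+1 then coef Z i' j else 0) = 0.
  have := congr1 (fun W => coef W i j.+1) H.
  by rewrite !coefB coef_CM coef_xM coef_yM coef_xM; case: i => [|i] //; rewrite coef_yM.
have Z0 i : forall j, coef Z i j = 0.
  elim: i => [|i IH] j; first by have := E 0%N j; rewrite subr0 mulr0 subr0.
  by have := E i.+1 j; rewrite !IH mulr0 !subr0.
by apply: coefP => i j; rewrite Z0.
Qed.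

Lemma umv_reg Z : (yy - xx) * Z = 0 -> Z = 0.
Proof. by move=> h; apply: (@dxy_reg 0); rewrite /dxy /CC !cst0 mul0r subr0. Qed.
Lemma umv_eq_uv_reg Z : (yy - xx) * Z = xx * yy * Z -> Z = 0.
Proof. by move=> h; apply: (@dxy_reg 1); rewrite /dxy /CC !cst1 mul1r mulrBl h subrr. Qed.

Definition swapxy (Z : S) : S := Fps (fun i => Fps (fun j => coef Z j i)).
Lemma coef_swapxy Z i j : coef (swapxy Z) i j = coef Z j i. Proof. by []. Qed.
Lemma swapxyM Z W : swapxy (Z * W) = swapxy Z * swapxy W.
Proof. by apply: coefP => i j; rewrite coef_swapxy !coefM exchange_big. Qed.
Lemma swapxyB Z W : swapxy (Z - W) = swapxy Z - swapxy W.
Proof. by apply: coefP. Qed.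
Lemma swapxyU s : swapxy (U s) = V s.
Proof. by apply: coefP => i j; rewrite coef_swapxy coefU coefV. Qed.
Lemma swapxyV s : swapxy (V s) = U s.
Proof. by apply: coefP => i j; rewrite coef_swapxy coefU coefV. Qed.

(* The divided difference (g(u) - g(v)) / (u^{-1} - v^{-1}). *)
Definition divdiff (g : fps R) : S := Fps (fun i => Fps (fun j => fcoef g (i + j).+1)).
Lemma divdiffE g : U g - V g = (xx - yy) * divdiff g.
Proof.
apply: coefP => i j; rewrite mulrBl !coefB coefU coefV coef_xM coef_yM.
case: i => [|i]; case: j => [|j] /=; rewrite ?subrr //.
- by rewrite !subr0 /coef /= addn0.
- by rewrite /coef /= addnS addSn subrr.
Qed.

(* (y - x) Z = x y g(v) forces g = 0: on the diagonal x = y the left side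
   vanishes while the right side becomes x^2 g(x). *)
Lemma diag_V_eq0 (Z : S) s : (yy - xx) * Z = xx * yy * V s -> s = 0.
Proof.
rewrite mulrBl -mulrA => H.
have E i j : (if j is j'.+1 then coef Z i j' else 0) - (if i is i'.+1 then coef Z i' j else 0)
   = (if i is i'.+1 then if j is j'.+1 then (if i' == 0%N then fcoef s j' else 0) else 0 else 0).
  have := congr1 (fun W => coef W i j) H.
  rewrite coefB coef_yM coef_xM coef_xM; case: i => [|i] //; case: j => [|j] //;
  by rewrite coef_yM ?coefV.
have Z1 i : coef Z i 0 = 0.
  by have := E i.+1 0%N; rewrite sub0r => /eqP; rewrite oppr_eq0 => /eqP.
have Z2 j : forall i, coef Z i.+1 j = 0.
  elim: j => [|j IH] i; first exact: Z1.
  by have := E i.+2 j.+1 => /=; rewrite IH sub0r => /eqP; rewrite oppr_eq0 => /eqP.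
have Z3 j : coef Z 0 j = 0 by have := E 0%N j.+1 => /=; rewrite subr0.
by apply: fpsP => j; have := E 1%N j.+1 => /=; rewrite Z2 Z3 subr0.
Qed.

Lemma eq_of_divisible W g g' : (yy - xx) * W = xx * yy * (U g - V g') -> g = g'.
Proof.
move=> h; apply/eqP; rewrite -subr_eq0; apply/eqP.
apply: (@diag_V_eq0 (W + xx * yy * divdiff g)).
have split_diff : U g - V g' = (xx - yy) * divdiff g + V (g - g').
  by rewrite VB -divdiffE; abel.
have move_xy : (yy - xx) * (xx * yy * divdiff g) = xx * yy * ((yy - xx) * divdiff g).
  by rewrite mulrA -xy_central -mulrA.
rewrite mulrDr h split_diff move_xy mulrDr addrAC -mulrDr -mulrDl.
by rewrite addrA subrK subrr mul0r mulr0 add0r.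
Qed.
End TwoVariables.
Arguments xx {R}. Arguments yy {R}.

Definition coefz (R : nzRingType) (Z : fps (fps R)) (m n : int) : R :=
  match m, n with Posz i, Posz j => coef Z i j | _, _ => 0 end.

Lemma coefz_xM (R : nzRingType) (Z : fps (fps R)) m n :
  coefz (xx * Z) (m + 1) n = coefz Z m n.
Proof.
case: m => [i|[|k]]; case: n => [j|j] //=.
- by rewrite addn1 coef_xM.
- by rewrite subnn coef_xM.
Qed.

Lemma coefz_yM (R : nzRingType) (Z : fps (fps R)) m n :
  coefz (yy * Z) m (n + 1) = coefz Z m n.
Proof.
case: n => [j|[|k]]; case: m => [i|i] //=.
- by rewrite addn1 coef_yM.
- by rewrite subnn coef_yM.
Qed.

(* The two-variable objects of Defs (families indexed by the exponents of
   u and v) obtained from Z : A[[x, y]] as u^p v^q Z(u^{-1}, v^{-1}). *)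
Section Embedding.
Variables (F : fieldType) (A : algType F).
Local Notation S := (fps (fps A)).

Definition emb (p q : nat) (Z : S) (a b : int) : A := coefz Z (p%:Z - a) (q%:Z - b).

Lemma emb_mulu p q Z a b : emb p q Z (a - 1) b = emb p.+1 q Z a b.
Proof. by rewrite /emb; congr coefz; lia. Qed.
Lemma emb_mulv p q Z a b : emb p q Z a (b - 1) = emb p q.+1 Z a b.
Proof. by rewrite /emb; congr coefz; lia. Qed.
Lemma emb_xM p q Z : emb p.+1 q (xx * Z) = emb p q Z.
Proof.
apply: funext => a; apply: funext => b.
by rewrite /emb -[RHS]coefz_xM; congr coefz; lia.
Qed.
Lemma emb_yM p q Z : emb p q.+1 (yy * Z) = emb p q Z.
Proof.
apply: funext => a; apply: funext => b.
by rewrite /emb -[RHS]coefz_yM; congr coefz; lia.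
Qed.
Lemma emb_B p q Z W a b : emb p q (Z - W) a b = emb p q Z a b - emb p q W a b.
Proof. by rewrite /emb; case: (p%:Z - a); case: (q%:Z - b); rewrite //= subr0. Qed.
Lemma emb_scale p q Z (c : F) a b : c *: emb p q Z a b = emb p q (CC c%:A * Z) a b.
Proof.
rewrite /emb; case: (p%:Z - a); case: (q%:Z - b) => //= *; rewrite ?scaler0 //.
by rewrite coef_CM -scalerAl mul1r.
Qed.
Lemma emb_inj p q Z W : (forall a b, emb p q Z a b = emb p q W a b) -> Z = W.
Proof.
move=> H; apply: coefP => i j; have := H (p%:Z - i%:Z) (q%:Z - j%:Z).
by rewrite /emb !subKr.
Qed.

Lemma ser2_emb (c : nat -> nat -> A) (Z : S) :
  (forall i j, coef Z i j = c i j) -> ser2 c = emb 0 0 Z.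
Proof.
move=> H; apply: funext => a; apply: funext => b; rewrite /ser2 /emb !sub0r.
by case: a => [[|m]|m]; case: b => [[|n]|n]; rewrite //= H.
Qed.

Lemma emb_umv p Z : mul_umv (emb p p Z) = emb p.+1 p.+1 ((yy - xx) * Z).
Proof.
apply: funext => a; apply: funext => b.
by rewrite /mul_umv emb_mulu emb_mulv mulrBl emb_B emb_xM emb_yM.
Qed.
Lemma emb_uv p Z : emb p p Z = emb p.+1 p.+1 (xx * yy * Z).
Proof. by rewrite -mulrA emb_xM emb_yM. Qed.
Lemma emb_umvh p Z : mul_umvh (emb p p Z) = emb p.+1 p.+1 (dxy (Defs.half F)%:A * Z).
Proof.
apply: funext => a; apply: funext => b.
by rewrite /mul_umvh emb_umv [emb p p Z]emb_uv emb_scale /dxy !mulrBl -!mulrA !emb_B.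
Qed.
End Embedding.

Section PermutationOperators.
Variables (F : fieldType) (A : algType F).
Implicit Types X : op4 (int -> int -> A).

Lemma opmul_lP X i j k l : opmul_l (Pmat F) X i j k l = X k j i l.
Proof.
apply: funext => a; apply: funext => b.
rewrite /opmul_l (bigD1 k) //= [X in _ + X]big1 ?addr0; last first.
  by move=> p hp; apply: big1 => q _; rewrite /Pmat (negbTE hp) andbF scale0r.
rewrite (bigD1 i) //= [X in _ + X]big1 ?addr0 /Pmat ?eqxx /= ?scale1r //.
by move=> q hq; rewrite eq_sym (negbTE hq) scale0r.
Qed.
Lemma opmul_rP X i j k l : opmul_r X (Pmat F) i j k l = X i l k j.
Proof.
apply: funext => a; apply: funext => b.
rewrite /opmul_r (bigD1 l) //= [X in _ + X]big1 ?addr0; last first.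
  by move=> p hp; apply: big1 => q _; rewrite /Pmat (negbTE hp) scale0r.
rewrite (bigD1 j) //= [X in _ + X]big1 ?addr0 /Pmat ?eqxx /= ?scale1r //.
by move=> q hq; rewrite eq_sym (negbTE hq) ?andbF scale0r.
Qed.
Lemma opmul_lQ X i j k l : k != rev_ord i -> opmul_l (Qmat F) X i j k l = fun _ _ => 0.
Proof.
move=> hk; apply: funext => a; apply: funext => b; rewrite /opmul_l big1 // => p _.
by apply: big1 => q _; rewrite /Qmat (negbTE hk) scale0r.
Qed.
Lemma opmul_rQ X i j k l : l != rev_ord j -> opmul_r X (Qmat F) i j k l = fun _ _ => 0.
Proof.
move=> hl; apply: funext => a; apply: funext => b; rewrite /opmul_r big1 // => p _.
by apply: big1 => q _; rewrite /Qmat (negbTE hl) andbF scale0r.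
Qed.
End PermutationOperators.

Lemma sub_swap (V : zmodType) (a b c d : V) : a - b = c - d -> a - c = b - d.
Proof. by move=> h; rewrite -[a](subrK b) h; abel. Qed.

(* Entries of the RTT relation with k <> -i and l <> -j: the Q-term drops
   out, the factor u - v - 1/2 cancels, and what remains is the relation
     (u - v) [t_ij(u), t_kl(v)] = t_kj(u) t_il(v) - t_kj(v) t_il(u),
   written below after multiplication by x y = 1/(u v). *)
Section RTTEntries.
Variables (F : fieldType) (A : algType F).
Local Notation S := (fps (fps A)).
Local Notation h := (Defs.half F)%:A.

Lemma dxy_half_central (Z : S) : GRing.comm (dxy h) Z.
Proof.
have hc (a : A) : GRing.comm h a by exact: comm_alg.
apply/commr_sym; apply: commrB; first apply: commrB.
- exact/commr_sym/yy_central.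
- exact/commr_sym/xx_central.
- by apply: commrM; apply/commr_sym; [apply: CC_central | apply: xy_central].
Qed.

(* One side of the RTT relation at an entry whose Q-term vanishes: if the
   T-product and its P-image are encoded by M1 and M2, the side encodes
   (u - v - 1/2) ((u - v) M1 - M2). *)
Lemma rtt_side (X1 X2 X3 : int -> int -> A) (M1 M2 : S) a b :
  X1 = emb 0 0 M1 -> X2 = emb 0 0 M2 -> X3 = (fun _ _ => 0) ->
  mul_umv (mul_umvh X1) a b - mul_umvh X2 a b + mul_umv X3 a b
  = emb 2 2 (dxy h * ((yy - xx) * M1 - xx * yy * M2)) a b.
Proof.
move=> -> -> ->; have -> : mul_umv (fun _ _ => 0 : A) a b = 0 by rewrite /mul_umv subrr.
rewrite addr0 !emb_umvh emb_umv (emb_uv 1) -emb_B.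
by rewrite mulrBr !mulrA -!dxy_half_central !mulrA.
Qed.

Variable T : 'I_3 -> 'I_3 -> nat -> A.
Hypothesis hT : YR_so3_rel T.
Definition tser i j : fps A := Fps (T i j).

Lemma rtt_entry i j k l : k != rev_ord i -> l != rev_ord j ->
  (yy - xx) * (U (tser i j) * V (tser k l) - V (tser k l) * U (tser i j)) =
  xx * yy * (U (tser k j) * V (tser i l) - V (tser k j) * U (tser i l)).
Proof.
move=> hk hl; case: hT => _ hR _ _.
have e1 : T1T2 T i j k l = emb 0 0 (U (tser i j) * V (tser k l)).
  by apply: ser2_emb => m n; rewrite coefUV.
have e2 : T1T2 T k j i l = emb 0 0 (U (tser k j) * V (tser i l)).
  by apply: ser2_emb => m n; rewrite coefUV.
have e3 : T2T1 T i j k l = emb 0 0 (V (tser k l) * U (tser i j)).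
  by apply: ser2_emb => m n; rewrite coefVU.
have e4 : T2T1 T i l k j = emb 0 0 (V (tser k j) * U (tser i l)).
  by apply: ser2_emb => m n; rewrite coefVU.
have lhs a b := rtt_side a b e1 (etrans (opmul_lP _ i j k l) e2) (opmul_lQ (T1T2 T) j l hk).
have rhs a b := rtt_side a b e3 (etrans (opmul_rP _ i j k l) e4) (opmul_rQ (T2T1 T) i k hl).
have sides a b := etrans (esym (lhs a b)) (etrans (hR i j k l a b) (rhs a b)).
have /eqP := emb_inj sides; rewrite -subr_eq0 -mulrBr => /eqP /dxy_reg /eqP.
by rewrite subr_eq0 !mulrBr => /eqP; apply: sub_swap.
Qed.
End RTTEntries.

Lemma lincomb6_eq0 (V : zmodType) (G X1 X2 X3 X4 X5 X6 : V) :
  X1 = 0 -> X2 = 0 -> X3 = 0 -> X4 = 0 -> X5 = 0 -> X6 = 0 ->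
  G = X1 - X2 - X3 + X4 + X5 - X6 -> G = 0.
Proof. by move=> -> -> -> -> -> -> ->; rewrite !(subr0, addr0). Qed.

(* Read
   D = u - v, P = 1 (both up to the central unit 1/(uv)), a = k_{-1},
   e = e_{-1,0}, f = f_{0,-1}, k = k_0 and i = k_{-1}^{-1}, the suffix u or v
   giving the variable.  By the Gauss decomposition
     t_{-1,-1} = a,  t_{-1,0} = a e,  t_{0,-1} = f a,  t_{00} = f a e + k,
   and H1-H5 are the relations of rtt_entry (H3 with u and v exchanged)
   between these entries. *)
Section CommutatorIdentity.
Variable R : nzRingType.
Variables D P au av eu ev fu fv ku kv iu iv : R.
Hypothesis D_central : forall z, D * z = z * D.
Hypothesis P_central : forall z, P * z = z * P.
Hypothesis D_reg : forall z, D * z = 0 -> z = 0.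
Hypotheses (inv_au : iu * au = 1) (inv_av : av * iv = 1).
Hypothesis H1 : au * av = av * au.
Hypothesis H2 : D * (au * (fv * av) - (fv * av) * au) = P * ((fu * au) * av - (fv * av) * au).
Hypothesis H3 : D * ((au * eu) * av - av * (au * eu)) = P * (av * (au * eu) - au * (av * ev)).
Hypothesis H4 : D * ((au * eu) * (fv * av) - (fv * av) * (au * eu)) =
  P * ((fu * au * eu + ku) * av - (fv * av * ev + kv) * au).
Hypothesis H5 : D * (au * (fv * av * ev + kv) - (fv * av * ev + kv) * au) =
  P * ((fu * au) * (av * ev) - (fv * av) * (au * eu)).

Local Ltac cnorm := central_norm D D_central P P_central.
Local Ltac to0 h := move/eqP: h; rewrite -subr_eq0 => /eqP h.

Lemma swap_a X : X * av * au = X * au * av.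
Proof. by rewrite -!mulrA H1. Qed.

(* From H2: how a(u) moves past f(v). *)
Lemma a_f_exchange : D * au * fv = D * fv * au - P * fv * au + P * fu * au.
Proof.
suff Hs : D * (au * fv) * av = ((D - P) * fv + P * fu) * au * av.
  have := congr1 (fun z => z * iv) Hs; rewrite -!mulrA inv_av !mulr1 => ->.
  by expand; cnorm.
move: H2; rewrite !mulrBr !mulrA !swap_a => /eqP; rewrite subr_eq => /eqP ->.
rewrite !mulrDl ?mulrBl ?mulrA !mulNr.
by rewrite [LHS]addrC [LHS]addrA [RHS]addrAC.
Qed.

(* From H3: how e(u) moves past a(v). *)
Lemma e_a_exchange : D * eu * av = D * av * eu + P * av * eu - P * av * ev.
Proof.
have lcan X Y : au * X = au * Y -> X = Y.
  by move=> H; rewrite -[X]mul1r -inv_au -mulrA H mulrA inv_au mul1r.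
apply: lcan; move: H3; rewrite !mulrBr !mulrA !swap_a => /eqP; rewrite subr_eq => /eqP H.
rewrite mulrDr !mulrA -[au * D]D_central -[au * P]P_central H.
by rewrite [LHS](ACl (3*1*2)).
Qed.

(* The combination
     D H4 - (a_f_exchange) D eu av - D fv au (e_a_exchange)
       + P fv au (e_a_exchange) + P H5 - (a_f_exchange) P av ev
   eliminates every term except the following. *)
Lemma commutator_cleared : D * D * (au * eu * fv * av) - D * D * (au * fv * eu * av) =
  D * P * (ku * av) - D * P * (au * kv).
Proof.
have e_a' := congr1 (fun z => fv * au * z) e_a_exchange; move: e_a' => /=.
rewrite !mulrDr !mulrN; cnorm => e_a'.
have h4 := congr1 (fun z => D * z) H4; move: h4 => /=; expand; cnorm; rewrite ?swap_a => h4.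
have f1 := congr1 (fun z => D * z * eu * av) a_f_exchange; move: f1 => /=; expand; cnorm => f1.
have e1 := congr1 (fun z => D * z) e_a'; move: e1 => /=; expand; cnorm => e1.
have e2 := congr1 (fun z => P * z) e_a'; move: e2 => /=; expand; cnorm => e2.
have h5 := congr1 (fun z => P * z) H5; move: h5 => /=; expand; cnorm; rewrite ?swap_a => h5.
have f2 := congr1 (fun z => P * z * av * ev) a_f_exchange; move: f2 => /=; expand; cnorm => f2.
to0 h4; to0 f1; to0 e1; to0 e2; to0 h5; to0 f2.
apply/eqP; rewrite -subr_eq0; apply/eqP.
by apply: (lincomb6_eq0 h4 f1 e1 e2 h5 f2); abel.
Qed.

Lemma ef_commutator : D * (eu * fv - fv * eu) = P * (iu * ku - kv * iv).
Proof.
have h : D * (au * eu * fv * av) - D * (au * fv * eu * av) = P * (ku * av) - P * (au * kv).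
  apply/eqP; rewrite -subr_eq0; apply/eqP; apply: D_reg.
  move/eqP: commutator_cleared; rewrite -subr_eq0 => /eqP <-.
  by expand; abel.
have cancel_u X : X * iu * au = X by rewrite -mulrA inv_au mulr1.
have cancel_v X : X * av * iv = X by rewrite -mulrA inv_av mulr1.
have := congr1 (fun z => iu * z * iv) h => /=.
expand; cnorm; rewrite ?cancel_u ?cancel_v => ->.
by expand; cnorm.
Qed.
End CommutatorIdentity.

Section GaussEntries.
Variables (F : fieldType) (A : algType F).
Variables (T : 'I_3 -> 'I_3 -> nat -> A) (k : 'I_3 -> nat -> A) (e f : 'I_3 -> 'I_3 -> nat -> A).
Hypothesis hG : gauss_decomp T k e f.

Lemma gaussE i j :
  tser T i j = \sum_(p < 3) Fps (Fmat f i p) * Fps (k p) * Fps (Emat e p j).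
Proof.
by case: hG => _ _ _ h; apply: fpsP => n; rewrite /tser /= h fcoef_sum.
Qed.

Lemma ord3_0 : (ord0 : 'I_3) = im1. Proof. exact: val_inj. Qed.
Lemma ord3_1 : (lift ord0 ord0 : 'I_3) = i0. Proof. exact: val_inj. Qed.
Lemma ord3_2 : (lift ord0 (lift ord0 ord0) : 'I_3) = ip1. Proof. exact: val_inj. Qed.

Local Ltac gauss_entry := rewrite gaussE !big_ord_recl big_ord0 /Fmat /Emat /=;
  rewrite ord3_2 ord3_1 ord3_0 ?mul1r ?mulr1 ?mul0r ?mulr0 ?addr0 ?add0r.

Lemma tser_mm : tser T im1 im1 = Fps (k im1).
Proof. by gauss_entry. Qed.
Lemma tser_m0 : tser T im1 i0 = Fps (k im1) * Fps (e im1 i0).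
Proof. by gauss_entry. Qed.
Lemma tser_0m : tser T i0 im1 = Fps (f i0 im1) * Fps (k im1).
Proof. by gauss_entry. Qed.
Lemma tser_00 :
  tser T i0 i0 = Fps (f i0 im1) * Fps (k im1) * Fps (e im1 i0) + Fps (k i0).
Proof. by gauss_entry. Qed.
End GaussEntries.

Section SeriesIdentity.
Variables (F : fieldType) (A : algType F).
Variables (T : 'I_3 -> 'I_3 -> nat -> A) (k : 'I_3 -> nat -> A) (e f : 'I_3 -> 'I_3 -> nat -> A).
Hypotheses (hT : YR_so3_rel T) (hG : gauss_decomp T k e f).
Variable kinv : fps A.
Hypotheses (kinvK : kinv * Fps (k im1) = 1) (kKinv : Fps (k im1) * kinv = 1).

Local Notation a := (Fps (k im1)).
Local Notation k0 := (Fps (k i0)).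
Local Notation e0 := (Fps (e im1 i0)).
Local Notation f0 := (Fps (f i0 im1)).

Lemma ef_commutator_series :
  (yy - xx) * (U e0 * V f0 - V f0 * U e0) = xx * yy * (U (kinv * k0) - V (kinv * k0)).
Proof.
have D_central (z : fps (fps A)) : (yy - xx) * z = z * (yy - xx).
  by rewrite mulrBl mulrBr xx_central yy_central.
have H1 : U a * V a = V a * U a.
  apply/eqP; rewrite -subr_eq0; apply/eqP; apply: umv_eq_uv_reg.
  by have := rtt_entry hT (i:=im1) (j:=im1) (k:=im1) (l:=im1) isT isT; rewrite (tser_mm hG).
have H2 := rtt_entry hT (i:=im1) (j:=im1) (k:=i0) (l:=im1) isT isT.
rewrite (tser_mm hG) (tser_0m hG) UM VM in H2.
(* H3 is the relation for (i,j,k,l) = (-1,-1,-1,0) with u and v exchanged. *)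
have H3 := congr1 (@swapxy A) (rtt_entry hT (i:=im1) (j:=im1) (k:=im1) (l:=i0) isT isT).
rewrite (tser_mm hG) (tser_m0 hG) UM VM !swapxyM !swapxyB !swapxyM !swapxyU !swapxyV in H3.
rewrite -/xx -/yy -[xx - yy]opprB mulNr -mulrN opprB yy_central in H3.
have H4 := rtt_entry hT (i:=im1) (j:=i0) (k:=i0) (l:=im1) isT isT.
rewrite (tser_mm hG) (tser_m0 hG) (tser_0m hG) (tser_00 hG) !UD !VD !UM !VM in H4.
have H5 := rtt_entry hT (i:=im1) (j:=im1) (k:=i0) (l:=i0) isT isT.
rewrite (tser_mm hG) (tser_m0 hG) (tser_0m hG) (tser_00 hG) VD !UM !VM in H5.
have inv_u : U kinv * U a = 1 by rewrite -UM kinvK U1.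
have inv_v : V a * V kinv = 1 by rewrite -VM kKinv V1.
have := ef_commutator D_central (@xy_central _) (@umv_reg _) inv_u inv_v H1 H2 H3 H4 H5.
rewrite -UM -VM => comm_ef.
(* k_{-1}^{-1} k_0 = k_0 k_{-1}^{-1} *)
by rewrite {2}(eq_of_divisible comm_ef).
Qed.
End SeriesIdentity.

Unset Implicit Arguments.

Theorem proposition3p3
    (F : fieldType) (hF : [pchar F] =i pred0) (A : algType F)
    (T : 'I_3 -> 'I_3 -> nat -> A) (hT : YR_so3_rel T)
    (k : 'I_3 -> nat -> A) (e f : 'I_3 -> 'I_3 -> nat -> A)
    (hG : gauss_decomp T k e f)
    (kinv : nat -> A)
    (hkinv : (forall n, ser_mul kinv (k im1) n = ser_one A n) /\
             (forall n, ser_mul (k im1) kinv n = ser_one A n)) :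
  let g := ser_mul kinv (k i0) in
  forall a b : int,
    mul_umv (ser2 (fun m n => e im1 i0 m * f i0 im1 n - f i0 im1 n * e im1 i0 m)) a b
    = lift_u g a b - lift_v g a b.
Proof.
move=> g a b; case: hkinv => kinvK kKinv.
have inv_l : Fps kinv * Fps (k im1) = 1 by apply: fpsP; exact: kinvK.
have inv_r : Fps (k im1) * Fps kinv = 1 by apply: fpsP; exact: kKinv.
have series_eq := ef_commutator_series hT hG inv_l inv_r.
have -> : ser2 (fun m n => e im1 i0 m * f i0 im1 n - f i0 im1 n * e im1 i0 m) =
    emb 0 0 (U (Fps (e im1 i0)) * V (Fps (f i0 im1)) - V (Fps (f i0 im1)) * U (Fps (e im1 i0))).
  by apply: ser2_emb => i j; rewrite coefB coefUV coefVU.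
have -> : lift_u g = emb 0 0 (U (Fps g)) by apply: ser2_emb => i j; rewrite coefU.
have -> : lift_v g = emb 0 0 (V (Fps g)) by apply: ser2_emb => i j; rewrite coefV.
by rewrite emb_umv series_eq -emb_B (emb_uv 0).
Qed.
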